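(* Let $k\geq3$ and let $\lambda,\mu\in\mathbb{C}$ satisfy $$\Big(\lambda+\frac{k-2}{3}\Big)\Big(\mu-\frac{k+1}{3}\Big)+\frac{1}{36}(k+1)(k-2)=0.$$ Define $W:\mathcal{D}^k_{\lambda,\mu}(S^1)\to\mathcal{F}_{\mu-\lambda-k+2}$ by $$W\Big(\sum_{i=0}^k a_i(x)\frac{d^i}{dx^i}\Big)=\big(\alpha_2\,a_k''(x)+\alpha_1\,a_{k-1}'(x)+\alpha_0\,a_{k-2}(x)\big)(dx)^{\mu-\lambda-k+2},$$ where $\alpha_2=\tfrac23 k(k-1)(k+3\lambda-2)^2$, $\alpha_1=2(k-1)(k+3\lambda-2)(2-2\lambda-k)$, $\alpha_0=3k^2+12\lambda k+12\lambda^2-11k-24\lambda+10$. Then $W$ is well defined (independent of the coordinate $x$) and $\mathrm{Diff}(S^1)$-equivariant.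
   Context: For $\lambda\in\mathbb{C}$, $\mathcal{F}_\lambda$ denotes the space of smooth $\lambda$-densities $\phi(x)(dx)^\lambda$ on $S^1$ with $\mathrm{Diff}(S^1)$-action $\rho^\lambda_{f^{-1}}:\phi(x)(dx)^\lambda\mapsto (f'(x))^\lambda\phi(f(x))(dx)^\lambda$. $\mathcal{D}^k_{\lambda,\mu}(S^1)$ is the space of linear differential operators $A=\sum_{i=0}^k a_i(x)\frac{d^i}{dx^i}:\mathcal{F}_\lambda\to\mathcal{F}_\mu$ of order $\le k$ (in a local coordinate $x$), with $\mathrm{Diff}(S^1)$-action $A\mapsto\rho^\mu_f\circ A\circ\rho^\lambda_{f^{-1}}$. *)

From Stdlib Require Import Reals.
From Coquelicot Require Import Coquelicot.
Open Scope R_scope.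

(* A complex-valued function of the real variable x (a lift to R of a
   function on S^1 = R / 2 pi Z). *)
Definition CFun := R -> C.

Definition cre (phi : CFun) : R -> R := fun x => Re (phi x).
Definition cim (phi : CFun) : R -> R := fun x => Im (phi x).

Definition cderiv_n (n : nat) (phi : CFun) : CFun :=
  fun x => (Derive_n (cre phi) n x, Derive_n (cim phi) n x).

Definition smoothR (f : R -> R) : Prop := forall n x, ex_derive_n f n x.
Definition smoothC (phi : CFun) : Prop := smoothR (cre phi) /\ smoothR (cim phi).

Definition smooth_S1 (phi : CFun) : Prop :=
  smoothC phi /\ forall x, phi (x + 2 * PI) = phi x.

(* lift to R of an orientation-preserving diffeomorphism of S^1 *)
Definition diffeo_lift (g : R -> R) : Prop :=
  smoothR g /\ (forall x, 0 < Derive g x) /\ (forall x, g (x + 2 * PI) = g x + 2 * PI).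

(* t^l for t > 0 real and l complex: exp(l ln t) *)
Definition cpow (t : R) (l : C) : C :=
  (exp (Re l * ln t) * cos (Im l * ln t), exp (Re l * ln t) * sin (Im l * ln t)).

(* rho^l_{g^{-1}} : phi(x)(dx)^l |-> (g'(x))^l phi(g(x)) (dx)^l *)
Definition rho_inv (l : C) (g : R -> R) (phi : CFun) : CFun :=
  fun x => Cmult (cpow (Derive g x) l) (phi (g x)).

Fixpoint csum (f : nat -> C) (n : nat) : C :=
  match n with
  | O => f O
  | S m => Cplus (csum f m) (f (S m))
  end.

Definition apply_op (k : nat) (a : nat -> CFun) (phi : CFun) : CFun :=
  fun x => csum (fun i => Cmult (a i x) (cderiv_n i phi x)) k.

Definition kC (k : nat) : C := RtoC (INR k).

Definition alpha2 (k : nat) (l : C) : C :=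
  (RtoC (2/3) * kC k * (kC k - 1) * (kC k + 3 * l - 2) * (kC k + 3 * l - 2))%C.
Definition alpha1 (k : nat) (l : C) : C :=
  (2 * (kC k - 1) * (kC k + 3 * l - 2) * (2 - 2 * l - kC k))%C.
Definition alpha0 (k : nat) (l : C) : C :=
  (3 * kC k * kC k + 12 * l * kC k + 12 * l * l - 11 * kC k - 24 * l + 10)%C.

Definition Wop (k : nat) (l : C) (a : nat -> CFun) : CFun :=
  fun x => (alpha2 k l * cderiv_n 2 (a k) x
            + alpha1 k l * cderiv_n 1 (a (k - 1)%nat) x
            + alpha0 k l * a (k - 2)%nat x)%C.

(* Test the intertwining relation on the Fourier modes e^{iny}.  The j-th
   derivative of (g')^λ e^{in g} is e^{in g} times a polynomial in in whose
   coefficients depend only on g, and a polynomial vanishing at every in,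
   n ∈ ℕ, is zero.  Comparing coefficients therefore expresses b_k, b_{k-1},
   b_{k-2} through a_k∘g, a_{k-1}∘g, a_{k-2}∘g, h = g''/g' and h'.  Substituted
   into W, the terms in h, h' and h^2 come with coefficients that are
   polynomial multiples of the left-hand side of the relation between λ and
   μ, so they vanish, and what remains is (g')^{μ-λ-k+2} (W a)∘g. *)

From Stdlib Require Import Reals Lra Lia FunctionalExtensionality.
From Coquelicot Require Import Coquelicot.
Open Scope R_scope.

Lemma smoothR_ex_derive f : smoothR f -> forall x, ex_derive f x.
Proof. intros Hf x. exact (Hf 1%nat x). Qed.

Lemma Derive_n_S f n x : Derive_n f (S n) x = Derive_n (Derive f) n x.
Proof.
  revert x; induction n as [|n IH]; intros x; [reflexivity|].
  apply Derive_ext, IH.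
Qed.

Lemma smoothR_Derive f : smoothR f -> smoothR (Derive f).
Proof.
  intros Hf [|n] x; [exact I|].
  eapply ex_derive_ext; [intros t; apply Derive_n_S | exact (Hf (S (S n)) x)].
Qed.

Lemma smoothR_of_Derive f :
  (forall x, ex_derive f x) -> smoothR (Derive f) -> smoothR f.
Proof.
  intros Hf Hdf [|[|n]] x; [exact I | apply Hf |].
  eapply ex_derive_ext; [intros t; symmetry; apply Derive_n_S | exact (Hdf (S n) x)].
Qed.

Inductive sum_closure (P : (R -> R) -> Prop) : (R -> R) -> Prop :=
  | sum_closure_in f : P f -> sum_closure P f
  | sum_closure_plus f h :
      sum_closure P f -> sum_closure P h -> sum_closure P (fun x => f x + h x).

Lemma sum_closure_ext P f h :
  (forall x, f x = h x) -> sum_closure P h -> sum_closure P f.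
Proof. intros E; replace f with h; [easy | apply functional_extensionality; congruence]. Qed.

Section DeriveClosedClass.

Variable P : (R -> R) -> Prop.
Hypothesis P_ex_derive : forall f, P f -> forall x, ex_derive f x.
Hypothesis P_Derive : forall f, P f -> sum_closure P (Derive f).

Lemma sum_closure_ex_derive f : sum_closure P f -> forall x, ex_derive f x.
Proof.
  induction 1 as [f Pf | f h _ IHf _ IHh]; intros x; auto.
  now apply (ex_derive_plus f h).
Qed.

Lemma sum_closure_Derive f : sum_closure P f -> sum_closure P (Derive f).
Proof.
  induction 1 as [f Pf | f h Sf IHf Sh IHh]; auto.
  apply (sum_closure_ext _ _ (fun x => Derive f x + Derive h x)); [|now constructor].
  intros x; apply Derive_plus; now apply sum_closure_ex_derive.
Qed.

Lemma sum_closure_smoothR f : sum_closure P f -> smoothR f.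
Proof.
  intros Sf n; revert f Sf; induction n as [|n IH]; intros f Sf x; [exact I|].
  destruct n; [now apply sum_closure_ex_derive|].
  eapply ex_derive_ext; [intros t; symmetry; apply Derive_n_S|].
  apply (IH (Derive f)), sum_closure_Derive, Sf.
Qed.

End DeriveClosedClass.

Lemma smoothR_plus f h : smoothR f -> smoothR h -> smoothR (fun x => f x + h x).
Proof.
  intros Hf Hh. apply (sum_closure_smoothR smoothR).
  - exact smoothR_ex_derive.
  - intros u Hu; constructor; now apply smoothR_Derive.
  - now repeat constructor.
Qed.

Lemma smoothR_const c : smoothR (fun _ => c).
Proof. intros n x; apply ex_derive_n_const. Qed.

Lemma smoothR_scal c f : smoothR f -> smoothR (fun x => c * f x).
Proof. intros Hf n x; now apply ex_derive_n_scal_l. Qed.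

Lemma smoothR_opp f : smoothR f -> smoothR (fun x => - f x).
Proof. intros Hf n x; now apply ex_derive_n_opp. Qed.

Lemma smoothR_minus f h : smoothR f -> smoothR h -> smoothR (fun x => f x - h x).
Proof. intros Hf Hh; apply (smoothR_plus f (fun x => - h x)); auto using smoothR_opp. Qed.

Lemma smoothR_id : smoothR (fun x => x).
Proof.
  apply smoothR_of_Derive; [intros; apply ex_derive_id|].
  replace (Derive (fun x => x)) with (fun _ : R => 1); [apply smoothR_const|].
  apply functional_extensionality; intros x; now rewrite Derive_id.
Qed.

Lemma smoothR_mult f h : smoothR f -> smoothR h -> smoothR (fun x => f x * h x).
Proof.
  intros Hf Hh.
  apply (sum_closure_smoothR
           (fun F => exists u v, smoothR u /\ smoothR v /\ F = (fun x => u x * v x))).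
  - intros F (u & v & Hu & Hv & ->) x.
    apply ex_derive_mult; now apply smoothR_ex_derive.
  - intros F (u & v & Hu & Hv & ->).
    apply (sum_closure_ext _ _ (fun x => Derive u x * v x + u x * Derive v x)).
    + intros x; apply Derive_mult; now apply smoothR_ex_derive.
    + apply sum_closure_plus; apply sum_closure_in.
      * exists (Derive u), v; auto using smoothR_Derive.
      * exists u, (Derive v); auto using smoothR_Derive.
  - constructor; now exists f, h.
Qed.

Lemma smoothR_comp f g : smoothR f -> smoothR g -> smoothR (fun x => f (g x)).
Proof.
  intros Hf Hg.
  apply (sum_closure_smoothR
           (fun F => exists u v, smoothR u /\ smoothR v /\ F = (fun x => u (g x) * v x))).
  - intros F (u & v & Hu & Hv & ->) x.
    apply ex_derive_mult; [apply ex_derive_comp|]; now apply smoothR_ex_derive.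
  - intros F (u & v & Hu & Hv & ->).
    apply (sum_closure_ext _ _
      (fun x => Derive u (g x) * (Derive g x * v x) + u (g x) * Derive v x)).
    + intros x.
      pose proof (smoothR_ex_derive u Hu (g x)).
      pose proof (smoothR_ex_derive g Hg x).
      pose proof (smoothR_ex_derive v Hv x).
      rewrite Derive_mult, Derive_comp; auto using ex_derive_comp; ring.
    + apply sum_closure_plus; apply sum_closure_in.
      * exists (Derive u), (fun x => Derive g x * v x).
        auto using smoothR_Derive, smoothR_mult.
      * exists u, (Derive v); auto using smoothR_Derive.
  - apply (sum_closure_ext _ _ (fun x => f (g x) * 1)); [intros; ring|].
    constructor; exists f, (fun _ => 1); auto using smoothR_const.
Qed.

Lemma smoothR_exp : smoothR exp.
Proof.
  assert (Dexp : Derive exp = exp).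
  { apply functional_extensionality; intros x.
    apply is_derive_unique; apply is_derive_Reals; apply derivable_pt_lim_exp. }
  apply (sum_closure_smoothR (fun F => F = exp)).
  - intros F -> x; apply ex_derive_Reals_1, derivable_pt_exp.
  - intros F ->; rewrite Dexp; now apply sum_closure_in.
  - now apply sum_closure_in.
Qed.

Lemma smoothR_sin_cos : smoothR sin /\ smoothR cos.
Proof.
  assert (Dsin : Derive sin = cos).
  { apply functional_extensionality; intros x.
    apply is_derive_unique; apply is_derive_Reals; apply derivable_pt_lim_sin. }
  assert (Dcos : Derive cos = fun x => - sin x).
  { apply functional_extensionality; intros x.
    apply is_derive_unique; apply is_derive_Reals; apply derivable_pt_lim_cos. }
  set (P := fun F => F = sin \/ F = cos \/ F = (fun x => - sin x) \/ F = (fun x => - cos x)).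
  assert (P_ex_derive : forall f, P f -> forall x, ex_derive f x).
  { assert (Hs : forall x, ex_derive sin x)
      by (intros; apply ex_derive_Reals_1, derivable_pt_sin).
    assert (Hc : forall x, ex_derive cos x)
      by (intros; apply ex_derive_Reals_1, derivable_pt_cos).
    intros F [-> | [-> | [-> | ->]]] x; auto; now apply (ex_derive_opp (V := R_NormedModule)). }
  assert (P_Derive : forall f, P f -> sum_closure P (Derive f)).
  { intros F [-> | [-> | [-> | ->]]]; apply sum_closure_in; unfold P.
    - rewrite Dsin; auto.
    - rewrite Dcos; auto.
    - right; right; right. apply functional_extensionality; intros x.
      now rewrite Derive_opp, Dsin.
    - left. apply functional_extensionality; intros x.
      rewrite Derive_opp, Dcos. ring. }
  split; apply (sum_closure_smoothR P); auto; constructor; unfold P; auto.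
Qed.

Lemma smoothR_inv h : smoothR h -> (forall x, 0 < h x) -> smoothR (fun x => / h x).
Proof.
  intros Hh Hpos.
  apply (sum_closure_smoothR
           (fun F => exists w n, smoothR w /\ F = (fun x => w x * (/ h x) ^ n))).
  - intros F (w & n & Hw & ->) x.
    apply ex_derive_mult; [now apply smoothR_ex_derive|].
    apply ex_derive_pow, ex_derive_inv; [now apply smoothR_ex_derive | apply Rgt_not_eq, Hpos].
  - intros F (w & n & Hw & ->).
    apply (sum_closure_ext _ _ (fun x => Derive w x * (/ h x) ^ n
                                       + (- INR n * w x * Derive h x) * (/ h x) ^ S n)).
    + intros x. specialize (Hpos x).
      pose proof (smoothR_ex_derive h Hh x).
      assert (ex_derive (fun y => / h y) x) by (apply ex_derive_inv; auto; lra).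
      rewrite Derive_mult, Derive_pow, Derive_inv;
        auto using ex_derive_pow, smoothR_ex_derive; [|lra].
      destruct n; simpl; [ring | field; lra].
    + apply sum_closure_plus; apply sum_closure_in.
      * exists (Derive w), n; auto using smoothR_Derive.
      * exists (fun x => - INR n * w x * Derive h x), (S n).
        auto using smoothR_mult, smoothR_scal, smoothR_Derive.
  - apply (sum_closure_ext _ _ (fun x => 1 * (/ h x) ^ 1)); [intros; ring|].
    constructor; exists (fun _ => 1), 1%nat; auto using smoothR_const.
Qed.

Definition log_deriv (f : R -> R) (x : R) : R := Derive f x / f x.

Lemma smoothR_log_deriv f : smoothR f -> (forall x, 0 < f x) -> smoothR (log_deriv f).
Proof.
  intros Hf Hpos. apply (smoothR_mult (Derive f) (fun x => / f x));
    auto using smoothR_Derive, smoothR_inv.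
Qed.

Lemma is_derive_ln_comp f x :
  smoothR f -> (forall x, 0 < f x) -> is_derive (fun y => ln (f y)) x (log_deriv f x).
Proof.
  intros Hf Hpos. unfold log_deriv, Rdiv.
  apply (is_derive_comp ln f); [apply is_derive_Reals, derivable_pt_lim_ln, Hpos|].
  now apply Derive_correct, smoothR_ex_derive.
Qed.

Lemma smoothR_ln_comp f : smoothR f -> (forall x, 0 < f x) -> smoothR (fun x => ln (f x)).
Proof.
  intros Hf Hpos.
  apply smoothR_of_Derive; [intros x; eexists; now apply is_derive_ln_comp|].
  replace (Derive (fun y => ln (f y))) with (log_deriv f); [now apply smoothR_log_deriv|].
  apply functional_extensionality; intros x; symmetry.
  now apply is_derive_unique, is_derive_ln_comp.
Qed.

Open Scope C_scope.

Lemma RtoC_neq_0 r : r <> 0%R -> RtoC r <> 0.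
Proof. intros Hr E. apply Hr. now injection E. Qed.

Ltac C_field := field; repeat split; apply RtoC_neq_0; lra.

Lemma Cmult_cancel_r (u v w : C) : w <> 0 -> u * w = v * w -> u = v.
Proof.
  intros Hw E. replace u with (u * w / w) by (field; exact Hw).
  rewrite E. field. exact Hw.
Qed.

Lemma Ceq_by_difference (u v L R : C) : L = R -> u - v = L - R -> u = v.
Proof. intros E D. apply Ceq_minus. rewrite D, E. ring. Qed.

Lemma kC_0 : kC 0 = 0.
Proof. reflexivity. Qed.

Lemma kC_2 : kC 2 = 2.
Proof. apply injective_projections; cbn; ring. Qed.

Lemma kC_S n : kC (S n) = kC n + 1.
Proof. unfold kC. rewrite S_INR. apply injective_projections; cbn; ring. Qed.

Lemma kC_add i j : kC (i + j) = kC i + kC j.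
Proof. unfold kC. rewrite plus_INR. apply injective_projections; cbn; ring. Qed.

Definition cderiv (f : CFun) : CFun := cderiv_n 1 f.

Lemma cderiv_n_S j f : cderiv_n (S j) f = cderiv (cderiv_n j f).
Proof. reflexivity. Qed.

Lemma cderiv_n_O f x : cderiv_n 0 f x = f x.
Proof. now destruct (f x) eqn:E; unfold cderiv_n, cre, cim; cbn; rewrite E. Qed.

Lemma cderiv_ext f h x : (forall y, f y = h y) -> cderiv f x = cderiv h x.
Proof. intros E; now replace f with h by (apply functional_extensionality; congruence). Qed.

Lemma smoothC_plus f h : smoothC f -> smoothC h -> smoothC (fun y => f y + h y).
Proof. intros [] []; split; apply smoothR_plus; auto. Qed.

Lemma smoothC_mult f h : smoothC f -> smoothC h -> smoothC (fun y => f y * h y).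
Proof.
  intros [] []; split.
  - apply (smoothR_minus (fun y => Re (f y) * Re (h y))%R (fun y => Im (f y) * Im (h y))%R);
      apply smoothR_mult; auto.
  - apply (smoothR_plus (fun y => Re (f y) * Im (h y))%R (fun y => Im (f y) * Re (h y))%R);
      apply smoothR_mult; auto.
Qed.

Lemma smoothC_const c : smoothC (fun _ => c).
Proof. split; [exact (smoothR_const (Re c)) | exact (smoothR_const (Im c))]. Qed.

Lemma smoothC_RtoC r : smoothR r -> smoothC (fun y => RtoC (r y)).
Proof. split; [easy | exact (smoothR_const 0)]. Qed.

Lemma smoothC_cderiv f : smoothC f -> smoothC (cderiv f).
Proof. intros []; split; now apply smoothR_Derive. Qed.

Lemma smoothC_comp f g : smoothC f -> smoothR g -> smoothC (fun y => f (g y)).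
Proof.
  intros [] Hg; split; [apply (smoothR_comp (cre f)) | apply (smoothR_comp (cim f))]; auto.
Qed.

Definition Cexp (z : C) : C := (exp (Re z) * cos (Im z), exp (Re z) * sin (Im z))%R.

Lemma smoothC_Cexp u : smoothC u -> smoothC (fun y => Cexp (u y)).
Proof.
  intros [Hu1 Hu2]. destruct smoothR_sin_cos as [Hsin Hcos].
  split; apply smoothR_mult; apply smoothR_comp; auto using smoothR_exp.
Qed.

Lemma cderiv_plus f h x : smoothC f -> smoothC h ->
  cderiv (fun y => f y + h y) x = cderiv f x + cderiv h x.
Proof.
  intros [Hf1 Hf2] [Hh1 Hh2].
  apply injective_projections; apply Derive_plus; now apply smoothR_ex_derive.
Qed.

Lemma cderiv_mult f h x : smoothC f -> smoothC h ->
  cderiv (fun y => f y * h y) x = cderiv f x * h x + f x * cderiv h x.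
Proof.
  intros [Hf1 Hf2] [Hh1 Hh2].
  pose proof (smoothR_ex_derive _ Hf1 x). pose proof (smoothR_ex_derive _ Hf2 x).
  pose proof (smoothR_ex_derive _ Hh1 x). pose proof (smoothR_ex_derive _ Hh2 x).
  unfold cre, cim, Re, Im in *.
  apply injective_projections; unfold cderiv, cderiv_n, cre, cim, Re, Im; cbn -[Derive].
  - rewrite Derive_minus, !Derive_mult; auto using ex_derive_mult; ring.
  - rewrite Derive_plus, !Derive_mult; auto using ex_derive_mult; ring.
Qed.

Lemma cderiv_const c x : cderiv (fun _ => c) x = 0.
Proof.
  apply injective_projections; [exact (Derive_const (Re c) x) | exact (Derive_const (Im c) x)].
Qed.

Lemma cderiv_RtoC r x : cderiv (fun y => RtoC (r y)) x = RtoC (Derive r x).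
Proof. apply injective_projections; [reflexivity | exact (Derive_const 0 x)]. Qed.

Lemma cderiv_comp f g x : smoothC f -> smoothR g ->
  cderiv (fun y => f (g y)) x = Derive g x * cderiv f (g x).
Proof.
  intros [Hf1 Hf2] Hg.
  pose proof (smoothR_ex_derive _ Hg x).
  pose proof (smoothR_ex_derive _ Hf1 (g x)). pose proof (smoothR_ex_derive _ Hf2 (g x)).
  unfold cre, cim, Re, Im in *.
  apply injective_projections; unfold cderiv, cderiv_n, cre, cim, Re, Im; cbn -[Derive].
  - rewrite (Derive_comp (fun y => fst (f y)) g); auto; ring.
  - rewrite (Derive_comp (fun y => snd (f y)) g); auto; ring.
Qed.

Lemma cderiv_Cexp u x : smoothC u ->
  cderiv (fun y => Cexp (u y)) x = cderiv u x * Cexp (u x).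
Proof.
  intros [Hu1 Hu2].
  pose proof (smoothR_ex_derive _ Hu1 x). pose proof (smoothR_ex_derive _ Hu2 x).
  unfold cre, cim, Re, Im in *.
  (* [auto_derive] needs the two components as named functions. *)
  set (a := fun y => fst (u y)) in *. set (b := fun y => snd (u y)) in *.
  apply injective_projections; unfold cderiv, cderiv_n, Cexp, cre, cim, Re, Im; cbn -[Derive].
  - change (fun y => exp (fst (u y)) * cos (snd (u y)))%R
      with (fun y => exp (a y) * cos (b y))%R.
    apply is_derive_unique; auto_derive; auto; unfold a, b; ring.
  - change (fun y => exp (fst (u y)) * sin (snd (u y)))%R
      with (fun y => exp (a y) * sin (b y))%R.
    apply is_derive_unique; auto_derive; auto; unfold a, b; ring.
Qed.

Lemma cderiv_scal c f x : smoothC f -> cderiv (fun y => c * f y) x = c * cderiv f x.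
Proof.
  intros Hf. rewrite (cderiv_mult (fun _ => c)), cderiv_const; auto using smoothC_const.
  ring.
Qed.

Lemma smoothC_minus f h : smoothC f -> smoothC h -> smoothC (fun y => f y - h y).
Proof. intros [] []; split; apply smoothR_minus; auto. Qed.

Lemma cderiv_minus f h x : smoothC f -> smoothC h ->
  cderiv (fun y => f y - h y) x = cderiv f x - cderiv h x.
Proof.
  intros [Hf1 Hf2] [Hh1 Hh2].
  apply injective_projections; apply Derive_minus; now apply smoothR_ex_derive.
Qed.

Create HintDb smooth.
#[local] Hint Resolve smoothC_plus smoothC_mult smoothC_const smoothC_RtoC smoothC_cderiv
  smoothC_comp smoothC_Cexp smoothR_Derive : smooth.

Lemma Cexp_plus a b : Cexp (a + b) = Cexp a * Cexp b.
Proof.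
  apply injective_projections; unfold Cexp, Re, Im; cbn; rewrite exp_plus;
    [rewrite cos_plus | rewrite sin_plus]; ring.
Qed.

Lemma Cexp_neq0 z : Cexp z <> 0.
Proof.
  intros Hz. assert (E : Cexp (z + - z) = 1).
  { replace (z + - z) with (RtoC 0) by ring.
    apply injective_projections; unfold Cexp, Re, Im; cbn;
      rewrite exp_0, ?cos_0, ?sin_0; ring. }
  rewrite Cexp_plus, Hz, Cmult_0_l in E. injection E; lra.
Qed.

Lemma cpow_Cexp t e : cpow t e = Cexp (e * ln t).
Proof.
  apply injective_projections; unfold cpow, Cexp, Re, Im; cbn;
    now rewrite !Rmult_0_r, Rminus_0_r, Rplus_0_l.
Qed.

Lemma cpow_plus t e1 e2 : cpow t (e1 + e2) = cpow t e1 * cpow t e2.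
Proof. rewrite !cpow_Cexp, <- Cexp_plus. f_equal. ring. Qed.

Lemma cpow_plus_1 t e : (0 < t)%R -> cpow t (e + 1) = cpow t e * t.
Proof.
  intros Ht. rewrite cpow_plus. f_equal.
  apply injective_projections; unfold cpow, Re, Im; cbn;
    rewrite Rmult_1_l, Rmult_0_l, exp_ln, ?cos_0, ?sin_0 by exact Ht; ring.
Qed.

Lemma cpow_neq0 t e : cpow t e <> 0.
Proof. rewrite cpow_Cexp. apply Cexp_neq0. Qed.

Lemma smoothC_cpow f e :
  smoothR f -> (forall x, (0 < f x)%R) -> smoothC (fun x => cpow (f x) e).
Proof.
  intros Hf Hpos.
  replace (fun x => cpow (f x) e) with (fun x => Cexp (e * ln (f x))).
  - auto using smoothR_ln_comp with smooth.
  - apply functional_extensionality; intros; now rewrite cpow_Cexp.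
Qed.

Lemma cderiv_cpow f e x : smoothR f -> (forall x, (0 < f x)%R) ->
  cderiv (fun y => cpow (f y) e) x = e * log_deriv f x * cpow (f x) e.
Proof.
  intros Hf Hpos.
  rewrite (cderiv_ext _ (fun y => Cexp (e * ln (f y)))) by (intros; apply cpow_Cexp).
  rewrite cderiv_Cexp, cderiv_scal, cderiv_RtoC, cpow_Cexp;
    auto using smoothR_ln_comp with smooth.
  do 3 f_equal. apply is_derive_unique. now apply is_derive_ln_comp.
Qed.

Lemma csum_ext (f f' : nat -> C) n :
  (forall i, (i <= n)%nat -> f i = f' i) -> csum f n = csum f' n.
Proof. induction n; intros E; cbn; [|rewrite IHn by auto]; rewrite E; auto. Qed.

Lemma csum_plus (f f' : nat -> C) n : csum (fun i => f i + f' i) n = csum f n + csum f' n.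
Proof. induction n; cbn; [|rewrite IHn]; ring. Qed.

Lemma csum_mult_l c (f : nat -> C) n : c * csum f n = csum (fun i => c * f i) n.
Proof. induction n; cbn; [|rewrite <- IHn]; ring. Qed.

Lemma csum_swap (F : nat -> nat -> C) n m :
  csum (fun i => csum (F i) m) n = csum (fun j => csum (fun i => F i j) n) m.
Proof. induction n; cbn; [|rewrite IHn, <- csum_plus]; reflexivity. Qed.

Lemma csum_shift (F : nat -> C) n :
  csum (fun i => match i with O => 0 | S i' => F i' end) (S n) = csum F n.
Proof. induction n; cbn in *; [|rewrite IHn]; ring. Qed.

Lemma csum_zeros_below (f : nat -> C) n :
  (forall j, (j < n)%nat -> f j = 0) -> csum f n = f n.
Proof.
  induction n as [|n IH]; intros Z; [reflexivity|].
  cbn. rewrite IH by (intros; apply Z; lia). rewrite (Z n) by lia. ring.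
Qed.

Lemma csum_skip_zeros (f : nat -> C) i r :
  (forall j, (j < i)%nat -> f j = 0) -> csum f (r + i) = csum (fun j => f (j + i)%nat) r.
Proof.
  intros Z. induction r as [|r IH]; cbn; [now apply csum_zeros_below | now rewrite IH].
Qed.

Lemma smoothC_csum (F : nat -> CFun) n :
  (forall i, smoothC (F i)) -> smoothC (fun x => csum (fun i => F i x) n).
Proof. intros HF. induction n; cbn; auto using smoothC_plus. Qed.

Lemma cderiv_csum (F : nat -> CFun) n x : (forall i, smoothC (F i)) ->
  cderiv (fun y => csum (fun i => F i y) n) x = csum (fun i => cderiv (F i) x) n.
Proof.
  intros HF. induction n; cbn; [reflexivity|].
  rewrite (cderiv_plus (fun y => csum (fun i => F i y) n)), IHn; auto using smoothC_csum.
Qed.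

Lemma csum_minus (f f' : nat -> C) n : csum (fun i => f i - f' i) n = csum f n - csum f' n.
Proof. induction n; cbn; [|rewrite IHn]; ring. Qed.

Lemma csum_zeros_above (f : nat -> C) n :
  (forall j, (0 < j <= n)%nat -> f j = 0) -> csum f n = f O.
Proof.
  induction n as [|n IH]; intros Z; [reflexivity|].
  cbn. rewrite IH by (intros; apply Z; lia). rewrite (Z (S n)) by lia. ring.
Qed.

Definition exp_mode (z : C) : CFun := fun y => Cexp (z * y).

Lemma smoothC_exp_mode z : smoothC (exp_mode z).
Proof. unfold exp_mode. auto using smoothR_id with smooth. Qed.

Lemma cderiv_exp_mode z y : cderiv (exp_mode z) y = z * exp_mode z y.
Proof.
  unfold exp_mode.
  rewrite cderiv_Cexp, cderiv_scal, cderiv_RtoC, Derive_id; auto using smoothR_id with smooth.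
  ring.
Qed.

Lemma cderiv_n_exp_mode z i y : cderiv_n i (exp_mode z) y = Cpow z i * exp_mode z y.
Proof.
  induction i as [|i IH] in y |- *.
  - rewrite cderiv_n_O. cbn. ring.
  - rewrite cderiv_n_S, (cderiv_ext _ _ y IH), cderiv_scal, cderiv_exp_mode;
      auto using smoothC_exp_mode.
    cbn. ring.
Qed.

Definition fourier_freq (n : nat) : C := Ci * INR n.

Lemma smooth_S1_fourier_mode n : smooth_S1 (exp_mode (fourier_freq n)).
Proof.
  split; [apply smoothC_exp_mode|]. intros y.
  assert (Re_eq : Re (fourier_freq n * (y + 2 * PI)%R) = Re (fourier_freq n * y))
    by (cbn; ring).
  assert (Im_eq : Im (fourier_freq n * (y + 2 * PI)%R)
                  = (Im (fourier_freq n * y) + 2 * INR n * PI)%R) by (cbn; ring).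
  unfold exp_mode, Cexp. now rewrite Re_eq, Im_eq, cos_period, sin_period.
Qed.

(* The solutions of A(N+1) = A(N) + l + N, B(N+1) = B(N) + (l + N - 1) A(N)
   and C(N+1) = C(N) + A(N) with A(0) = B(1) = C(1) = 0: the recursions that
   [chain_coef] below imposes on its first two subdiagonals. *)
Definition coefA (l N : C) : C := N * l + N * (N - 1) / 2.
Definition coefB (l N : C) : C :=
  l * l * N * (N - 1) / 2 + l * N * (N - 1) * (N - 2) / 2
  + N * (N - 1) * (N - 2) * (3 * N - 5) / 24.
Definition coefC (l N : C) : C := l * N * (N - 1) / 2 + N * (N - 1) * (N - 2) / 6.

Section Diffeo.

Variable g : R -> R.
Hypothesis g_smooth : smoothR g.
Hypothesis g'_pos : forall x, (0 < Derive g x)%R.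

Local Notation h := (log_deriv (Derive g)).

Lemma smoothR_h : smoothR h.
Proof. apply smoothR_log_deriv; auto using smoothR_Derive. Qed.

Lemma smoothC_rho_inv e f : smoothC f -> smoothC (rho_inv e g f).
Proof. intros Hf. unfold rho_inv. auto using smoothC_cpow with smooth. Qed.

Lemma cderiv_rho_inv e f x : smoothC f ->
  cderiv (rho_inv e g f) x = e * h x * rho_inv e g f x + rho_inv (e + 1) g (cderiv f) x.
Proof.
  intros Hf. unfold rho_inv.
  rewrite cderiv_mult, cderiv_cpow, cderiv_comp, cpow_plus_1;
    auto using smoothC_cpow with smooth.
  ring.
Qed.

Variable l : C.

(* [chain_coef j s x] is the coefficient of z^s in
   e^{-z g(x)} (d/dx)^j ((g')^l e^{z g})(x). *)
Fixpoint chain_coef (j s : nat) : CFun :=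
  match j with
  | O => fun x => match s with O => cpow (Derive g x) l | S _ => 0 end
  | S j' => fun x => cderiv (chain_coef j' s) x
                     + match s with O => 0 | S s' => Derive g x * chain_coef j' s' x end
  end.

Lemma chain_coef_S_O j x : chain_coef (S j) 0 x = cderiv (chain_coef j 0) x.
Proof. cbn. ring. Qed.

Lemma chain_coef_S_S j s x :
  chain_coef (S j) (S s) x = cderiv (chain_coef j (S s)) x + Derive g x * chain_coef j s x.
Proof. reflexivity. Qed.

Lemma smoothC_chain_coef j s : smoothC (chain_coef j s).
Proof.
  revert s; induction j as [|j IH]; intros [|s]; cbn [chain_coef];
    auto using smoothC_cpow with smooth.
Qed.

Lemma chain_coef_above j s x : (j < s)%nat -> chain_coef j s x = 0.
Proof.
  revert s x; induction j as [|j IH]; intros [|s] x Hjs; try lia; [reflexivity|].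
  rewrite chain_coef_S_S, (cderiv_ext _ (fun _ => 0)), cderiv_const, IH;
    [ring | lia | intros; apply IH; lia].
Qed.

Lemma chain_coef_diag j x : chain_coef j j x = cpow (Derive g x) (l + kC j).
Proof.
  revert x; induction j as [|j IH]; intros x.
  - cbn. f_equal. unfold kC; cbn. ring.
  - rewrite chain_coef_S_S, (cderiv_ext _ (fun _ => 0)), cderiv_const, IH, kC_S,
      Cplus_assoc, cpow_plus_1; [ring | apply g'_pos | intros; apply chain_coef_above; lia].
Qed.

Lemma chain_coef_sub1 j x :
  chain_coef (S j) j x = coefA l (kC (S j)) * h x * cpow (Derive g x) (l + kC j).
Proof.
  revert x; induction j as [|j IH]; intros x.
  - rewrite chain_coef_S_O. change (chain_coef 0 0) with (fun y => cpow (Derive g y) l).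
    rewrite cderiv_cpow by auto using smoothR_Derive.
    unfold coefA, kC; cbn. replace (l + 0) with l by ring. C_field.
  - rewrite chain_coef_S_S, (cderiv_ext _ _ x (chain_coef_diag (S j))), cderiv_cpow, IH,
      (kC_S (S j)), kC_S, Cplus_assoc, cpow_plus_1 by auto using smoothR_Derive.
    unfold coefA. C_field.
Qed.

Lemma cderiv_log_deriv_cpow c e x :
  cderiv (fun y => c * h y * cpow (Derive g y) e) x
  = c * (Derive h x + e * h x * h x) * cpow (Derive g x) e.
Proof.
  rewrite cderiv_mult, cderiv_scal, cderiv_RtoC, cderiv_cpow;
    auto using smoothR_Derive, smoothC_cpow, smoothR_h with smooth.
  ring.
Qed.

Lemma chain_coef_sub2 j x :
  chain_coef (S (S j)) j x
  = (coefB l (kC (S (S j))) * h x * h x + coefC l (kC (S (S j))) * Derive h x)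
    * cpow (Derive g x) (l + kC j).
Proof.
  revert x; induction j as [|j IH]; intros x.
  - rewrite chain_coef_S_O, (cderiv_ext _ _ x (chain_coef_sub1 0)), cderiv_log_deriv_cpow.
    rewrite !kC_S, kC_0, Cplus_0_r. unfold coefA, coefB, coefC. C_field.
  - rewrite chain_coef_S_S, (cderiv_ext _ _ x (chain_coef_sub1 (S j))),
      cderiv_log_deriv_cpow, IH, (kC_S (S (S j))), (kC_S (S j)), kC_S, Cplus_assoc,
      cpow_plus_1 by apply g'_pos.
    unfold coefA, coefB, coefC. C_field.
Qed.

Lemma chain_poly_S z K j x : (j < K)%nat ->
  csum (fun s => Cpow z s * chain_coef (S j) s x) K
  = cderiv (fun y => csum (fun s => Cpow z s * chain_coef j s y) K) x
    + z * Derive g x * csum (fun s => Cpow z s * chain_coef j s x) K.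
Proof.
  intros HjK. destruct K as [|K]; [lia|].
  rewrite cderiv_csum by (intros; auto using smoothC_chain_coef with smooth).
  transitivity (csum (fun s => Cpow z s * cderiv (chain_coef j s) x) (S K)
    + csum (fun s => match s with
                     | O => 0
                     | S s' => Cpow z (S s') * (Derive g x * chain_coef j s' x)
                     end) (S K)).
  { rewrite <- csum_plus. apply csum_ext; intros [|s] _;
      rewrite ?chain_coef_S_O, ?chain_coef_S_S; ring. }
  rewrite csum_shift. f_equal.
  - apply csum_ext; intros; now rewrite cderiv_scal by apply smoothC_chain_coef.
  - change (csum ?F (S K)) with (csum F K + F (S K)).
    cbv beta. rewrite (chain_coef_above j (S K)), Cmult_0_r, Cplus_0_r, csum_mult_l by lia.
    apply csum_ext; intros; cbn; ring.
Qed.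

Lemma cderiv_n_rho_inv_exp_mode z K j x : (j <= K)%nat ->
  cderiv_n j (rho_inv l g (exp_mode z)) x
  = exp_mode z (g x) * csum (fun s => Cpow z s * chain_coef j s x) K.
Proof.
  induction j as [|j IH] in x |- *; intros HjK.
  - rewrite cderiv_n_O, csum_zeros_above by (intros [|s] ?; [lia | cbn; ring]).
    unfold rho_inv. cbn. ring.
  - rewrite cderiv_n_S, (cderiv_ext _ _ x (fun y => IH y ltac:(lia))), chain_poly_S by lia.
    rewrite cderiv_mult, cderiv_comp, cderiv_exp_mode;
      auto using smoothC_exp_mode, smoothC_csum, smoothC_chain_coef with smooth.
    ring.
Qed.

End Diffeo.

Close Scope C_scope.

Lemma Cmod_fourier_freq n : Cmod (fourier_freq n) = INR n.
Proof.
  unfold fourier_freq. rewrite Cmod_mult, Cmod_Ci, Cmod_R, Rabs_pos_eq by apply pos_INR.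
  ring.
Qed.

Lemma Cmod_csum_le (f : nat -> C) n : Cmod (csum f n) <= sum_f_R0 (fun i => Cmod (f i)) n.
Proof.
  induction n as [|n IH]; cbn; [lra|].
  eapply Rle_trans; [apply Cmod_triangle | lra].
Qed.

Lemma nat_mult_bounded_eq0 r M :
  0 <= r -> (forall n, (1 <= n)%nat -> INR n * r <= M) -> r = 0.
Proof.
  intros Hr HM. destruct (Rle_lt_or_eq_dec 0 r Hr) as [Hpos | <-]; [exfalso | reflexivity].
  destruct (INR_unbounded (M / r)) as [n Hn].
  specialize (HM (S n) ltac:(lia)). rewrite S_INR in HM.
  apply (Rmult_lt_compat_r r) in Hn; [|exact Hpos].
  unfold Rdiv in Hn. rewrite Rmult_assoc, Rinv_l, Rmult_1_r in Hn by lra.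
  pose proof (pos_INR n). nra.
Qed.

Lemma poly_lead_coef_eq0 K (p : nat -> C) :
  (forall n, csum (fun s => (Cpow (fourier_freq n) s * p s)%C) (S K) = 0%C) -> p (S K) = 0%C.
Proof.
  intros Hroots. apply Cmod_eq_0.
  apply (nat_mult_bounded_eq0 _ (sum_f_R0 (fun s => Cmod (p s)) K)); [apply Cmod_ge_0|].
  intros n Hn.
  assert (Hn1 : 1 <= INR n) by (apply (le_INR 1); exact Hn).
  assert (Hlead : (Cpow (fourier_freq n) (S K) * p (S K))%C
                  = (- csum (fun s => Cpow (fourier_freq n) s * p s) K)%C).
  { specialize (Hroots n). cbn [csum] in Hroots.
    rewrite <- (Cplus_0_l (- _)), <- Hroots. ring. }
  assert (Hbound : INR n ^ S K * Cmod (p (S K))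
                   <= INR n ^ K * sum_f_R0 (fun s => Cmod (p s)) K).
  { rewrite <- Cmod_fourier_freq, <- Cmod_pow, <- Cmod_mult, Hlead, Cmod_opp, scal_sum.
    eapply Rle_trans; [apply Cmod_csum_le | apply sum_Rle; intros s Hs].
    rewrite Cmod_mult, Cmod_pow, Rmult_comm.
    apply Rmult_le_compat_l; [apply Cmod_ge_0 | apply Rle_pow; [|exact Hs]].
    now rewrite Cmod_fourier_freq. }
  assert (Hpow : 0 < INR n ^ K) by (apply pow_lt; lra).
  apply (Rmult_le_reg_l (INR n ^ K)); [exact Hpow|]. cbn in Hbound. nra.
Qed.

Lemma poly_coef_eq0 K (p : nat -> C) :
  (forall n, csum (fun s => (Cpow (fourier_freq n) s * p s)%C) K = 0%C) ->
  forall s, (s <= K)%nat -> p s = 0%C.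
Proof.
  induction K as [|K IH]; intros Hroots s Hs.
  - replace s with 0%nat by lia. specialize (Hroots 0%nat). cbn in Hroots.
    now rewrite Cmult_1_l in Hroots.
  - assert (Hlead : p (S K) = 0%C) by now apply poly_lead_coef_eq0.
    destruct (Nat.eq_dec s (S K)) as [-> | Hne]; [exact Hlead|].
    apply IH; [|lia]. intros n. specialize (Hroots n). cbn [csum] in Hroots.
    now rewrite Hlead, Cmult_0_r, Cplus_0_r in Hroots.
Qed.

Open Scope C_scope.

Lemma apply_op_exp_mode k a z y :
  apply_op k a (exp_mode z) y = exp_mode z y * csum (fun s => Cpow z s * a s y) k.
Proof.
  unfold apply_op. rewrite csum_mult_l. apply csum_ext; intros s _.
  rewrite cderiv_n_exp_mode. ring.
Qed.

Section Intertwining.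

Variable g : R -> R.
Hypothesis g_smooth : smoothR g.
Hypothesis g'_pos : forall x, (0 < Derive g x)%R.
Variables (l m : C) (k : nat) (a b : nat -> CFun).
Hypothesis intertwining : forall phi, smooth_S1 phi ->
  forall x, rho_inv m g (apply_op k a phi) x = apply_op k b (rho_inv l g phi) x.

Lemma apply_op_rho_inv_exp_mode z x :
  apply_op k b (rho_inv l g (exp_mode z)) x
  = exp_mode z (g x)
    * csum (fun s => Cpow z s * csum (fun j => b j x * chain_coef g l j s x) k) k.
Proof.
  unfold apply_op.
  transitivity (csum (fun j => csum (fun s =>
                  exp_mode z (g x) * (Cpow z s * (b j x * chain_coef g l j s x))) k) k).
  - apply csum_ext; intros j Hj.
    rewrite (cderiv_n_rho_inv_exp_mode g g_smooth g'_pos l z k j x Hj), !csum_mult_l.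
    apply csum_ext; intros; ring.
  - rewrite csum_swap, csum_mult_l. apply csum_ext; intros s _.
    rewrite !csum_mult_l. apply csum_ext; intros; ring.
Qed.

Lemma intertwining_coef x s : (s <= k)%nat ->
  csum (fun j => b j x * chain_coef g l j s x) k = cpow (Derive g x) m * a s (g x).
Proof.
  intros Hs. apply Ceq_minus. revert s Hs. apply poly_coef_eq0. intros n.
  pose proof (intertwining _ (smooth_S1_fourier_mode n) x) as H.
  set (z := fourier_freq n) in *.
  unfold rho_inv at 1 in H. rewrite apply_op_exp_mode, apply_op_rho_inv_exp_mode in H.
  apply (Cmult_cancel_r _ _ (exp_mode z (g x))); [apply Cexp_neq0|].
  apply (Ceq_by_difference _ _ _ _ (eq_sym H)).
  rewrite (csum_ext _ (fun s => Cpow z s * csum (fun j => b j x * chain_coef g l j s x) k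
                                - cpow (Derive g x) m * (Cpow z s * a s (g x))))
    by (intros; ring).
  rewrite csum_minus, <- csum_mult_l. ring.
Qed.

End Intertwining.

Lemma Wop_expansion_cancel (k : nat) (l m d h h' P0 P1 P2 Q0 Q1 R0 : C) :
  (l + (kC k - 2) / 3) * (m - (kC k + 1) / 3) + RtoC (1/36) * (kC k + 1) * (kC k - 2) = 0 ->
  d = m - l - kC k ->
  alpha2 k l * (d * (h' * P0 + h * (d * h * P0 + P1)) + (d + 1) * h * P1 + P2)
  + alpha1 k l * ((d + 1) * h * Q0 + Q1 - coefA l (kC k) * (h' * P0 + h * (d * h * P0 + P1)))
  + alpha0 k l * (R0 - coefA l (kC k - 1) * h * (Q0 - coefA l (kC k) * h * P0)
                  - (coefB l (kC k) * h * h + coefC l (kC k) * h') * P0)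
  = alpha2 k l * P2 + alpha1 k l * Q1 + alpha0 k l * R0.
Proof.
  intros E ->. set (K := kC k) in *.
  (* The two sides differ by the left-hand side of [E] times this factor. *)
  transitivity (alpha2 k l * P2 + alpha1 k l * Q1 + alpha0 k l * R0 + 0 *
    (4 * K * (K - 1) * (K - 2 + 3 * l) * h * P1 - 6 * (K - 1) * (K - 2 + 2 * l) * h * Q0
     + 2 * K * (K - 1) * (K - 2 + 3 * l) * h' * P0
     + K * (K - 1) * (2 * m * (K - 2 + 3 * l) - (K + 5) * (K - 2) / 2 - 2 * l * (K + 4))
       * h * h * P0)); [|ring].
  rewrite <- E. unfold alpha2, alpha1, alpha0, coefA, coefB, coefC. fold K.
  rewrite !RtoC_div by lra. C_field.
Qed.

Section Transform.

Variable g : R -> R.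
Hypothesis g_smooth : smoothR g.
Hypothesis g'_pos : forall x, (0 < Derive g x)%R.
Variables (l m : C) (s : nat) (a b : nat -> CFun).
Hypothesis a_smooth : forall i, (i <= S (S s))%nat -> smoothC (a i).
Hypothesis intertwining : forall phi, smooth_S1 phi ->
  forall x, rho_inv m g (apply_op (S (S s)) a phi) x = apply_op (S (S s)) b (rho_inv l g phi) x.

Local Notation k := (S (S s)).
Local Notation d := (m - l - kC k).
Local Notation h := (log_deriv (Derive g)).
Local Notation P0 x := (rho_inv d g (a k) x).
Local Notation P1 x := (rho_inv (d + 1) g (cderiv (a k)) x).
Local Notation P2 x := (rho_inv (d + 2) g (cderiv (cderiv (a k))) x).
Local Notation Q0 x := (rho_inv (d + 1) g (a (S s)) x).
Local Notation Q1 x := (rho_inv (d + 2) g (cderiv (a (S s))) x).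
Local Notation R0 x := (rho_inv (d + 2) g (a s) x).

Lemma intertwining_coef_shifted i r x : (r + i = k)%nat ->
  csum (fun j => b (j + i)%nat x * chain_coef g l (j + i) i x) r
  = cpow (Derive g x) (d + kC r) * a i (g x) * cpow (Derive g x) (l + kC i).
Proof.
  intros Hri.
  rewrite <- Cmult_assoc, (Cmult_comm (a i (g x))), Cmult_assoc, <- cpow_plus.
  replace (d + kC r + (l + kC i)) with m by (rewrite <- Hri, kC_add; ring).
  rewrite <- (intertwining_coef g g_smooth g'_pos l m k a b intertwining x i) by lia.
  rewrite <- Hri, csum_skip_zeros; [reflexivity|].
  intros j Hj. rewrite chain_coef_above by lia. ring.
Qed.

Lemma b_top_eq x : b k x = P0 x.
Proof.
  pose proof (intertwining_coef_shifted k 0 x eq_refl) as E. cbn [csum Nat.add] in E.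
  rewrite chain_coef_diag in E by auto.
  apply (Cmult_cancel_r _ _ (cpow (Derive g x) (l + kC k))); [apply cpow_neq0|].
  rewrite E. unfold rho_inv. rewrite kC_0, Cplus_0_r. ring.
Qed.

Lemma b_sub1_eq x : b (S s) x = Q0 x - coefA l (kC k) * h x * b k x.
Proof.
  pose proof (intertwining_coef_shifted (S s) 1 x eq_refl) as E. cbn [csum Nat.add] in E.
  rewrite chain_coef_diag, chain_coef_sub1 in E by auto.
  apply (Cmult_cancel_r _ _ (cpow (Derive g x) (l + kC (S s)))); [apply cpow_neq0|].
  apply (Ceq_by_difference _ _ _ _ E). unfold rho_inv. change (kC 1) with (RtoC 1). ring.
Qed.

Lemma b_sub2_eq x :
  b s x = R0 x - coefA l (kC k - 1) * h x * b (S s) x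
          - (coefB l (kC k) * h x * h x + coefC l (kC k) * Derive h x) * b k x.
Proof.
  pose proof (intertwining_coef_shifted s 2 x eq_refl) as E. cbn [csum Nat.add] in E.
  rewrite chain_coef_diag, chain_coef_sub1, chain_coef_sub2, kC_2 in E by auto.
  replace (kC k - 1) with (kC (S s)) by (rewrite (kC_S (S s)); ring).
  apply (Cmult_cancel_r _ _ (cpow (Derive g x) (l + kC s))); [apply cpow_neq0|].
  apply (Ceq_by_difference _ _ _ _ E). unfold rho_inv. ring.
Qed.

Lemma smoothC_a_top : smoothC (a k).
Proof. apply a_smooth; lia. Qed.

Lemma cderiv_b_top x : cderiv (b k) x = d * h x * P0 x + P1 x.
Proof. rewrite (cderiv_ext _ _ x b_top_eq). apply cderiv_rho_inv; auto using smoothC_a_top. Qed.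

Lemma cderiv2_b_top x :
  cderiv (cderiv (b k)) x
  = d * (Derive h x * P0 x + h x * (d * h x * P0 x + P1 x)) + (d + 1) * h x * P1 x + P2 x.
Proof.
  rewrite (cderiv_ext _ _ x cderiv_b_top).
  rewrite cderiv_plus, cderiv_mult, cderiv_scal, cderiv_RtoC, !cderiv_rho_inv;
    auto using smoothC_rho_inv, smoothR_h, smoothC_a_top with smooth.
  replace (d + 1 + 1) with (d + 2) by ring. ring.
Qed.

Lemma cderiv_b_sub1 x :
  cderiv (b (S s)) x
  = (d + 1) * h x * Q0 x + Q1 x
    - coefA l (kC k) * (Derive h x * P0 x + h x * (d * h x * P0 x + P1 x)).
Proof.
  rewrite (cderiv_ext _ _ x b_sub1_eq), (functional_extensionality _ _ b_top_eq).
  rewrite cderiv_minus, cderiv_mult, cderiv_scal, cderiv_RtoC, !cderiv_rho_inv;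
    auto using smoothC_rho_inv, smoothR_h, smoothC_a_top with smooth.
  replace (d + 1 + 1) with (d + 2) by ring. ring.
Qed.

Hypothesis lambda_mu :
  (l + (kC k - 2) / 3) * (m - (kC k + 1) / 3) + RtoC (1/36) * (kC k + 1) * (kC k - 2) = 0.

Lemma Wop_intertwines x : Wop k l b x = rho_inv (d + 2) g (Wop k l a) x.
Proof.
  unfold Wop. replace (k - 1)%nat with (S s) by lia. replace (k - 2)%nat with s by lia.
  change (cderiv_n 2 ?f) with (cderiv (cderiv f)). change (cderiv_n 1 ?f) with (cderiv f).
  rewrite cderiv2_b_top, cderiv_b_sub1, b_sub2_eq, b_sub1_eq, b_top_eq.
  rewrite (Wop_expansion_cancel k l m d) by (exact lambda_mu || reflexivity).
  unfold rho_inv. ring.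
Qed.

End Transform.

Theorem proposition4p1 (k : nat) (Hk : (3 <= k)%nat) (l m : C)
  (Hlm : ((l + (kC k - 2) / 3) * (m - (kC k + 1) / 3)
          + RtoC (1/36) * (kC k + 1) * (kC k - 2) = 0)%C)
  (g : R -> R) (Hg : diffeo_lift g)
  (a b : nat -> CFun)
  (Ha : forall i, (i <= k)%nat -> smooth_S1 (a i))
  (Hb : forall i, (i <= k)%nat -> smooth_S1 (b i))
  (Hab : forall phi, smooth_S1 phi ->
         forall x, rho_inv m g (apply_op k a phi) x
                   = apply_op k b (rho_inv l g phi) x) :
  forall x, Wop k l b x = rho_inv (m - l - kC k + 2)%C g (Wop k l a) x.
Proof.
  destruct Hg as [g_smooth [g'_pos _]].
  destruct k as [|[|s]]; [lia | lia |].
  apply Wop_intertwines; auto.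
  intros i Hi. now apply Ha.
Qed.
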